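(* Let $G$ be a finite subset of $\mathbb{N}^2$ that has at least one connected v-bridge. If $G$ contains a connected component $C$ (of the full grid graph of $G$) such that $C\cap(\{r_G\}\times\mathbb{N})\neq\emptyset$ and $C\cap(\mathbb{N}\times\{b_G\})=\emptyset$, then there exists a point $\vec x_E\in G\setminus C$ such that $E(\vec x_E)\notin G$ and $\vec x_E\notin\{r_G\}\times\mathbb{N}$.
   Context: The full grid graph of $V\subseteq\mathbb{Z}^2$ has vertex set $V$ and an edge between $\vec x,\vec y$ iff $\|\vec x-\vec y\|=1$; paths and connected components are taken in this graph. For a finite $S\subseteq\mathbb{Z}^2$ let $l_S=\min_{(x,y)\in S}x$, $r_S=\max_{(x,y)\in S}x$, $b_S=\min_{(x,y)\in S}y$, $t_S=\max_{(x,y)\in S}y$. An h-bridge of $S$ is a subset of $S$ of the form $\{(l_S,y),(r_S,y)\}$; a v-bridge is a subset of $S$ of the form $\{(x,b_S),(x,t_S)\}$. A bridge is connected if there is a simple path in (the full grid graph of) $S$ connecting its two points. Directions: $N(x,y)=(x,y+1)$, $E(x,y)=(x+1,y)$, $S(x,y)=(x,y-1)$, $W(x,y)=(x-1,y)$. *)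

(* Points of N^2 are pairs (x,y) : nat * nat.
   A finite subset of N^2 is represented by a list G (membership = \in). *)
From mathcomp Require Import all_boot.
Set Implicit Arguments. Unset Strict Implicit. Unset Printing Implicit Defensive.

Definition point := (nat * nat)%type.

Definition grid_adj (p q : point) : bool :=
  ((p.1 == q.1) && ((p.2 == q.2.+1) || (q.2 == p.2.+1))) ||
  ((p.2 == q.2) && ((p.1 == q.1.+1) || (q.1 == p.1.+1))).

Definition dirN (p : point) : point := (p.1, p.2.+1).
Definition dirE (p : point) : point := (p.1.+1, p.2).

Definition lS (S : seq point) : nat := foldr (fun p m => minn p.1 m) (head (0,0) S).1 S.
Definition rS (S : seq point) : nat := foldr (fun p m => maxn p.1 m) (head (0,0) S).1 S.
Definition bS (S : seq point) : nat := foldr (fun p m => minn p.2 m) (head (0,0) S).2 S.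
Definition tS (S : seq point) : nat := foldr (fun p m => maxn p.2 m) (head (0,0) S).2 S.

(* a path in the full grid graph of S from a to b with vertex list a :: p *)
Definition grid_path_in (S : seq point) (a b : point) (p : seq point) : Prop :=
  path grid_adj a p /\ last a p = b /\ all (fun z => z \in S) (a :: p).

Definition simple_grid_path_in (S : seq point) (a b : point) (p : seq point) : Prop :=
  grid_path_in S a b p /\ uniq (a :: p).

Definition connected_in (S : seq point) (a b : point) : Prop :=
  exists p, grid_path_in S a b p.

Definition has_connected_vbridge (S : seq point) : Prop :=
  exists x : nat, (x, bS S) \in S /\ (x, tS S) \in S /\
    exists p, simple_grid_path_in S (x, bS S) (x, tS S) p.

Definition component (S : seq point) (c : point) (y : point) : Prop :=
  y \in S /\ connected_in S c y.

(* Follow the connected v-bridge from its bottom end (x0, b_G) up to the row of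
   a point y of C lying in the column r_G; this reaches a point z of that row in
   the component of (x0, b_G), which is not C because C avoids the bottom row.
   Walking east from z along the row, we must leave G before reaching y, since
   otherwise z would be joined to y; the last point before the gap is x_E. *)
From mathcomp Require Import all_boot.
From mathcomp Require Import zify.
Set Implicit Arguments.
Unset Strict Implicit.

Lemma grid_adj_sym (a b : point) : grid_adj a b -> grid_adj b a.
Proof.
by rewrite /grid_adj => /orP[/andP[/eqP -> /orP[]]|/andP[/eqP -> /orP[]]] ->;
  rewrite eqxx ?orbT.
Qed.

Lemma grid_adj_leqS2 (a b : point) : grid_adj a b -> b.2 <= a.2.+1.
Proof.
by rewrite /grid_adj => /orP[/andP[_ /orP[]]|/andP[/eqP -> _]] => [/eqP|/eqP|]; lia.
Qed.

Lemma grid_adjE (a : point) : grid_adj a (dirE a).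
Proof. by rewrite /grid_adj /= !eqxx !orbT. Qed.

Section Connectivity.

Variable S : seq point.

Lemma connected_in_refl a : a \in S -> connected_in S a a.
Proof. by move=> aS; exists [::]; rewrite /grid_path_in /= aS. Qed.

Lemma connected_in_adj a b :
  a \in S -> b \in S -> grid_adj a b -> connected_in S a b.
Proof. by move=> aS bS ab; exists [:: b]; rewrite /grid_path_in /= aS bS ab. Qed.

Lemma connected_in_trans a b c :
  connected_in S a b -> connected_in S b c -> connected_in S a c.
Proof.
move=> [p [pab [<- pS]]] [q [qbc [<- qS]]]; exists (p ++ q).
rewrite /grid_path_in cat_path last_cat pab qbc; do 2!split => //.
by move: pS qS; rewrite /= all_cat => /andP[-> ->] /andP[_ ->].
Qed.

Lemma connected_in_sym a b : connected_in S a b -> connected_in S b a.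
Proof.
move=> [p]; elim: p a => [|z p IHp] a [/= azp [pb /andP[aS pS]]].
  by rewrite -pb; apply: connected_in_refl.
case/andP: azp => az zp; case/andP: pS => zS pS.
apply: (@connected_in_trans _ z); first by apply: IHp; rewrite /grid_path_in /= zS.
by apply: connected_in_adj => //; apply: grid_adj_sym.
Qed.

Lemma connected_in_memr a b : connected_in S a b -> b \in S.
Proof.
move=> [p [_ [<-]]]; elim: p a => [|z p IHp] a /=; first by case/andP.
by case/andP=> _; apply: IHp.
Qed.

(* A grid path changes height by at most one per step, so it meets every row
   between the rows of its ends. *)
Lemma grid_path_meets_row a b p y :
  grid_path_in S a b p -> a.2 <= y <= b.2 ->
  exists z, z.2 = y /\ connected_in S a z.
Proof.
elim: p a => [|z p IHp] a [/= azp [pb /andP[aS pS]]] /andP[ay yb].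
  exists a; split; last exact: connected_in_refl.
  by apply/eqP; rewrite eqn_leq ay pb.
have [<-|ay'] := eqVneq a.2 y; first by exists a; split; last exact: connected_in_refl.
case/andP: azp => az zp; case/andP: pS => zS pS.
have zy : z.2 <= y by move: (grid_adj_leqS2 az) ay ay'; lia.
have [w [wy zw]] : exists w, w.2 = y /\ connected_in S z w.
  by apply: IHp; rewrite /grid_path_in /= ?zS ?zy.
by exists w; split => //; apply: connected_in_trans zw; apply: connected_in_adj.
Qed.

Lemma row_east_gap x r y :
  (x, y) \in S -> x <= r -> ~ connected_in S (x, y) (r, y) ->
  exists k, [/\ x <= k < r, (k, y) \in S, dirE (k, y) \notin S
              & connected_in S (x, y) (k, y)].
Proof.
move=> + xr; have [n ->] : exists n, r = x + n by exists (r - x); lia.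
elim: n x {xr} => [|n IHn] x xS notconn.
  by case: notconn; rewrite addn0; apply: connected_in_refl.
have [x1S|x1S] := boolP (dirE (x, y) \in S); last first.
  by exists x; split => //; [lia | apply: connected_in_refl].
have step : connected_in S (x, y) (x.+1, y).
  by apply: connected_in_adj => //; apply: grid_adjE.
have [|k [xk kS k1S xk_conn]] := IHn x.+1 x1S.
  by move=> h; apply: notconn; rewrite addnS -addSn; apply: connected_in_trans step h.
by exists k; split => //; [lia | apply: connected_in_trans step xk_conn].
Qed.

End Connectivity.

Lemma leq_rS (S : seq point) p : p \in S -> p.1 <= rS S.
Proof.
rewrite /rS; elim: S (head _ S).1 => //= q S IHS i.
by rewrite inE => /orP[/eqP ->|/(IHS i)]; lia.
Qed.

Lemma bS_leq (S : seq point) p : p \in S -> bS S <= p.2.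
Proof.
rewrite /bS; elim: S (head _ S).2 => //= q S IHS i.
by rewrite inE => /orP[/eqP ->|/(IHS i)]; lia.
Qed.

Lemma leq_tS (S : seq point) p : p \in S -> p.2 <= tS S.
Proof.
rewrite /tS; elim: S (head _ S).2 => //= q S IHS i.
by rewrite inE => /orP[/eqP ->|/(IHS i)]; lia.
Qed.

Theorem mainTheorem5 (G : seq point) (c : point) :
  has_connected_vbridge G ->
  c \in G ->
  (exists y, component G c y /\ y.1 = rS G) ->
  (forall y, component G c y -> y.2 <> bS G) ->
  exists xE : point, xE \in G /\ ~ component G c xE /\
    dirE xE \notin G /\ xE.1 <> rS G.
Proof.
move=> [x0 [bottomG [_ [P [bridge _]]]]] _ [[y1 y2] [[yG cy] /= y1r]] C_off_bottom.
have off_C w : connected_in G (x0, bS G) w -> ~ component G c w.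
  move=> bw [_ cw]; apply: (C_off_bottom (x0, bS G)) => //; split => //.
  exact: connected_in_trans cw (connected_in_sym bw).
have [[z1 _] [/= -> bz]] : exists z, z.2 = y2 /\ connected_in G (x0, bS G) z.
  by apply: grid_path_meets_row bridge _; rewrite /= (bS_leq yG) (leq_tS yG).
have zG := connected_in_memr bz.
have zy1 : z1 <= y1 by rewrite y1r (leq_rS zG).
have z_y : ~ connected_in G (z1, y2) (y1, y2).
  by move=> zy; apply: (off_C (y1, y2)); [apply: connected_in_trans zy | split].
have [k [/andP[_ ky1] kG k1G zk]] := row_east_gap zG zy1 z_y.
exists (k, y2); split => //; split; first exact/off_C/(connected_in_trans bz).
by split => //=; lia.
Qed.
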